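(* Let $n\ge2$ and let $X$ be a simple directed graph with vertex set $[n]$. Let $p,q\in[n]$ satisfy: - $p\to q\in E(X)$; - $q\to p\notin E(X)$; - $\{p,q\}$ is sink-equivalent in $X$. Then $$\mathrm{ODP}(X,\mathrm{Cycle}_n)_{p\to q}=\frac{n\,x}{n-1}\,\mathrm{ODP}(X-q,\mathrm{Cycle}_{n-1}),$$ where $X-q$ is the induced subgraph of $X$ on $[n]\setminus\{q\}$.
   Context: For $n\ge2$, $\mathrm{Cycle}_n$ is the directed multigraph on $[n]$ with edges $i\to i+1$ ($1\le i\le n-1$) and $n\to1$; for $n=2$ its edges are $1\to2$ and $2\to1$. $\mathrm{Cycle}_1$ is a single vertex with no edges. For a simple directed graph $X$, a set $S\subseteq V(X)$ is sink-equivalent if for every $t\notin S$, either $s\to t\in E(X)$ for all $s\in S$, or $s\to t\notin E(X)$ for all $s\in S$. For directed graphs $X,Y$ with $|V(X)|=|V(Y)|$, $\mathrm{DFS}(X,Y)$ has as vertices the bijections $\sigma:V(X)\to V(Y)$. For each $\sigma$ and ordered pair $(a,b)$ of distinct vertices, it has $m_X(a,b)m_Y(\sigma(a),\sigma(b))$ edges from $\sigma$ to $\sigma\circ(a\,b)$, where $m_X(a,b)$ is the number of edges $a\to b$ in $X$. Thus $\mathrm{outdeg}(\sigma)=\sum_{a\ne b}m_X(a,b)m_Y(\sigma(a),\sigma(b))$ and $\mathrm{ODP}(X,Y)=\sum_\sigma x^{\mathrm{outdeg}(\sigma)}$. $\mathrm{ODP}(X,Y)_{a\to b}$ is the sum of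 $x^{\mathrm{outdeg}(\sigma)}$ over bijections $\sigma$ with $m_Y(\sigma(a),\sigma(b))\ge1$. *)

From HB Require Import structures.
From mathcomp Require Import all_boot all_order all_algebra all_fingroup.
Set Implicit Arguments. Unset Strict Implicit. Unset Printing Implicit Defensive.
Import GRing.Theory.
Local Open Scope ring_scope.

(* Vertices [n] = {1,...,n} are represented by 'I_n = {0,...,n-1} (vertex i+1 <-> i). *)

Definition simple_digraph (n : nat) (X : rel 'I_n) : Prop := irreflexive X.

Definition mult_simple (n : nat) (X : rel 'I_n) (a b : 'I_n) : nat := nat_of_bool (X a b).

Definition cycle_edges (n : nat) : seq (nat * nat) :=
  if (2 <= n)%N then [seq (i, i.+1) | i <- iota 0 n.-1] ++ [:: (n.-1, 0%N)] else [::].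

Definition mult_cycle (n : nat) (a b : 'I_n) : nat :=
  count (pred1 (val a, val b)) (cycle_edges n).

Definition outdeg (n : nat) (mX mY : 'I_n -> 'I_n -> nat) (s : {perm 'I_n}) : nat :=
  (\sum_(a : 'I_n) \sum_(b : 'I_n | a != b) mX a b * mY (s a) (s b))%N.

Definition ODP (n : nat) (mX mY : 'I_n -> 'I_n -> nat) : {poly rat} :=
  \sum_(s : {perm 'I_n}) 'X^(outdeg mX mY s).

Definition ODP_edge (n : nat) (mX mY : 'I_n -> 'I_n -> nat) (a b : 'I_n) : {poly rat} :=
  \sum_(s : {perm 'I_n} | (0 < mY (s a) (s b))%N) 'X^(outdeg mX mY s).

Definition sink_equivalent (n : nat) (X : rel 'I_n) (S : {set 'I_n}) : Prop :=
  forall t, t \notin S ->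
    (forall s, s \in S -> X s t) \/ (forall s, s \in S -> ~~ X s t).

(* Induced subgraph X - q on [n] \ {q}, relabelled onto 'I_(n-1) via the
   order-preserving bijection lift q : 'I_(n.-1) -> [n] \ {q}. *)
Definition delete_vertex (n : nat) (X : rel 'I_n) (q : 'I_n) : rel 'I_(n.-1) :=
  fun a b => X (lift q a) (lift q b).

From HB Require Import structures.
From mathcomp Require Import all_boot all_order all_algebra all_fingroup zify.
Import GRing.Theory.
Local Open Scope ring_scope.
Set Implicit Arguments. Unset Strict Implicit. Unset Printing Implicit Defensive.

(* A bijection places the vertices of X around the cycle, and its out-degree
   counts the edges a -> b of X such that b sits right after a.  Rotating the
   cycle preserves the out-degree, so both sides can be computed with q at the
   last position, at the price of a factor n on the left and n - 1 on the
   right.  When q is last and p second to last, deleting q and closing up the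
   cycle is a bijection onto the placements of X - q with p last: the edge
   p -> q is lost, and q -> f (f the first vertex) is traded for p -> f, which
   has the same status because {p, q} is sink-equivalent and q -/-> p.  So each
   term on the left is x times a term on the right. *)

Lemma val_addZp1 k (a : 'I_k.+1) : val (a + Zp1) = ((val a).+1 %% k.+1)%N.
Proof. by rewrite /= modnDmr addn1. Qed.

Lemma cycle_edgesE n : (2 <= n)%N ->
  cycle_edges n = [seq (i, i.+1 %% n)%N | i <- iota 0 n].
Proof.
case: n => [|n] // n_gt1; rewrite /cycle_edges n_gt1 -[n.+1.-1]/n.
rewrite -[in RHS]addn1 iotaD map_cat /= add0n addn1 modnn; congr (_ ++ _).
apply/eq_in_map => i.
by rewrite mem_iota => /andP[_ lt_i_n]; rewrite modn_small.
Qed.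

(* [a != b] matters only for k = 0, where Zp1 = 0 but Cycle_1 has no loop. *)
Lemma mult_cycleE k (a b : 'I_k.+1) : a != b -> mult_cycle a b = (b == a + Zp1).
Proof.
case: k a b => [|k] a b; first by rewrite !ord1.
move=> _; rewrite /mult_cycle cycle_edgesE // -val_eqE val_addZp1 count_uniq_mem; last first.
  by rewrite map_inj_uniq ?iota_uniq // => i j [].
congr nat_of_bool; apply/mapP/eqP => [[i _ [<- <-]] // | b_succ].
by exists (val a); rewrite ?mem_iota ?b_succ /=.
Qed.

Section CycleWeight.

Variable k : nat.
Implicit Types (s : {perm 'I_k.+1}) (a b c : 'I_k.+1) (mX : 'I_k.+1 -> 'I_k.+1 -> nat).

Definition cycle_succ s a : 'I_k.+1 := (s^-1)%g (s a + Zp1).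

Definition cycle_weight mX s : nat := \sum_a mX a (cycle_succ s a).

Lemma cycle_succE s a b : (b == cycle_succ s a) = (s b == s a + Zp1).
Proof. by rewrite /cycle_succ; apply/eqP/eqP => [->|<-]; rewrite ?permKV ?permK. Qed.

Lemma outdeg_cycle mX s : (forall a, mX a a = 0%N) ->
  outdeg mX (@mult_cycle k.+1) s = cycle_weight mX s.
Proof.
move=> mX_loopless; apply: eq_bigr => a _.
transitivity (\sum_b mX a b * (b == cycle_succ s a))%N.
  rewrite [RHS](bigD1 a) //= mX_loopless add0n.
  apply: eq_big => [b | b a_neq_b]; first by rewrite eq_sym.
  by rewrite mult_cycleE ?(inj_eq perm_inj) // cycle_succE.
rewrite (bigD1 (cycle_succ s a)) //= eqxx muln1 big1 ?addn0 //.
by move=> b /negbTE ->; rewrite muln0.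
Qed.

Definition rot c : {perm 'I_k.+1} := perm (addIr c).

Lemma rotE c a : rot c a = a + c.
Proof. by rewrite permE. Qed.

Lemma cycle_succ_rot s c : cycle_succ (s * rot c) =1 cycle_succ s.
Proof.
move=> a; apply/esym/eqP; rewrite cycle_succE !permM !rotE addrAC (inj_eq (addIr c)).
by rewrite -cycle_succE.
Qed.

Lemma cycle_weight_rot mX s c : cycle_weight mX (s * rot c) = cycle_weight mX s.
Proof. by apply: eq_bigr => a _; rewrite cycle_succ_rot. Qed.

Lemma sum_rot_invariant (V : nmodType) (P : pred {perm 'I_k.+1})
    (F : {perm 'I_k.+1} -> V) q :
    (forall s c, P (s * rot c)%g = P s) -> (forall s c, F (s * rot c)%g = F s) ->
  \sum_(s | P s) F s = (\sum_(s | P s && (s q == ord_max)) F s) *+ k.+1.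
Proof.
move=> P_rot F_rot; rewrite (partition_big (fun s => s q) xpredT) //=.
rewrite -[X in _ *+ X](card_ord k.+1) -sumr_const; apply: eq_bigr => j _.
rewrite (reindex_inj (mulIg (rot (j - ord_max)))); apply: eq_big => [s|s _] //.
by rewrite P_rot permM rotE (can2_eq (addrK _) (subrK _)) subKr.
Qed.

Lemma ODP_cycle mX q : (forall a, mX a a = 0%N) ->
  ODP mX (@mult_cycle k.+1) =
    (\sum_(s : {perm 'I_k.+1} | s q == ord_max) 'X^(cycle_weight mX s)) *+ k.+1.
Proof.
move=> mX_loopless; rewrite /ODP (eq_bigr (fun s => 'X^(cycle_weight mX s))).
  by rewrite (sum_rot_invariant (P := xpredT) q) // => s c; rewrite cycle_weight_rot.
by move=> s _; rewrite outdeg_cycle.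
Qed.

Lemma ODP_edge_cycle mX p q : p != q -> (forall a, mX a a = 0%N) ->
  ODP_edge mX (@mult_cycle k.+1) p q =
    (\sum_(s : {perm 'I_k.+1} | (s q == s p + Zp1) && (s q == ord_max))
       'X^(cycle_weight mX s)) *+ k.+1.
Proof.
move=> p_neq_q mX_loopless; rewrite /ODP_edge -sum_rot_invariant.
- apply: eq_big => [s | s _]; last by rewrite outdeg_cycle.
  by rewrite mult_cycleE ?(inj_eq perm_inj) // lt0b.
- by move=> s c; rewrite !permM !rotE addrAC (inj_eq (addIr c)).
- by move=> s c; rewrite cycle_weight_rot.
Qed.

End CycleWeight.

Section UnliftPerm.

Variable n : nat.
Implicit Types (i j : 'I_n.+1) (s : {perm 'I_n.+1}) (t : {perm 'I_n}).

Definition unlift_perm_fun i s (k : 'I_n) : 'I_n :=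
  odflt k (unlift (s i) (s (lift i k))).

Lemma lift_unlift_perm_fun i s k : lift (s i) (unlift_perm_fun i s k) = s (lift i k).
Proof.
have := neq_lift i k; rewrite -(inj_eq (@perm_inj _ s)).
by rewrite /unlift_perm_fun => /unlift_some[k' -> ->].
Qed.

Lemma unlift_perm_fun_inj i s : injective (unlift_perm_fun i s).
Proof.
move=> k1 k2 /(congr1 (lift (s i))); rewrite !lift_unlift_perm_fun.
by move/perm_inj/lift_inj.
Qed.

Definition unlift_perm i s : {perm 'I_n} := perm (@unlift_perm_fun_inj i s).

Lemma unlift_permK i j t : unlift_perm i (lift_perm i j t) = t.
Proof.
apply/permP => k; apply: (@lift_inj _ j); rewrite permE.
have := lift_unlift_perm_fun i (lift_perm i j t) k.
by rewrite lift_perm_id lift_perm_lift.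
Qed.

Lemma unlift_permKV i s : lift_perm i (s i) (unlift_perm i s) = s.
Proof.
apply/permP => k; case: (unliftP i k) => [k'|] ->; last by rewrite lift_perm_id.
by rewrite lift_perm_lift permE lift_unlift_perm_fun.
Qed.

Lemma big_lift_perm (R : Type) (idx : R) (op : Monoid.com_law idx) i j
    (F : {perm 'I_n.+1} -> R) :
  \big[op/idx]_(s : {perm 'I_n.+1} | s i == j) F s =
    \big[op/idx]_(t : {perm 'I_n}) F (lift_perm i j t).
Proof.
rewrite (reindex (lift_perm i j)); last first.
  exists (unlift_perm i) => [t _ | s /eqP <-]; first exact: unlift_permK.
  exact: unlift_permKV.
by apply: eq_bigl => t; rewrite lift_perm_id eqxx.
Qed.

End UnliftPerm.

Lemma ord_max_addZp1 k : (ord_max : 'I_k.+1) + Zp1 = ord0.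
Proof. by apply: val_inj; rewrite val_addZp1 modnn. Qed.

Lemma val_lift_max m (y : 'I_m.+1) : val (lift (ord_max : 'I_m.+2) y) = val y.
Proof. exact: lift_max. Qed.

Lemma lift_max_addZp1 m (y : 'I_m.+1) :
  lift ord_max y + Zp1 =
    (if y == ord_max then ord_max else lift ord_max (y + Zp1)) :> 'I_m.+2.
Proof.
case: eqP => [-> | /eqP y_neq_max]; apply: val_inj.
  by rewrite val_addZp1 val_lift_max modn_small.
have y_lt_m : (y < m)%N by rewrite ltn_neqAle -ltnS ltn_ord andbT.
by rewrite val_addZp1 !val_lift_max val_addZp1 !modn_small // ltnS // ltnW.
Qed.

Section LiftedCycle.

Variables (m : nat) (q : 'I_m.+2) (t : {perm 'I_m.+1}).

Lemma cycle_succ_lift_perm a :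
  cycle_succ (lift_perm q ord_max t) (lift q a) =
    if t a == ord_max then q else lift q (cycle_succ t a).
Proof.
rewrite /cycle_succ lift_perm_lift lift_max_addZp1 lift_permV.
by case: ifP => _; rewrite ?lift_perm_id ?lift_perm_lift.
Qed.

Lemma cycle_succ_lift_perm_id p' : t p' = ord_max ->
  cycle_succ (lift_perm q ord_max t) q = lift q (cycle_succ t p').
Proof.
move=> t_p'; rewrite /cycle_succ lift_perm_id t_p' !ord_max_addZp1 lift_permV.
have -> : ord0 = lift ord_max (ord0 : 'I_m.+1) by apply: val_inj; rewrite val_lift_max.
by rewrite lift_perm_lift.
Qed.

Lemma cycle_weight_lift_perm (mX : 'I_m.+2 -> 'I_m.+2 -> nat) p' : t p' = ord_max ->
  (cycle_weight mX (lift_perm q ord_max t) + mX (lift q p') (lift q (cycle_succ t p')) =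
   cycle_weight (fun a b => mX (lift q a) (lift q b)) t
     + mX (lift q p') q + mX q (lift q (cycle_succ t p')))%N.
Proof.
move=> t_p'; rewrite /cycle_weight (bigD1_ord q) //= (bigD1 p') //=.
rewrite [in RHS](bigD1 p') //=.
rewrite (cycle_succ_lift_perm_id t_p') cycle_succ_lift_perm t_p' eqxx.
rewrite (eq_bigr (fun a => mX (lift q a) (lift q (cycle_succ t a)))); last first.
  move=> a a_neq_p'; rewrite cycle_succ_lift_perm -t_p' (inj_eq perm_inj).
  by rewrite (negbTE a_neq_p').
set rest := \sum_(a | a != p') _.
lia.
Qed.

End LiftedCycle.

Lemma sink_equivalent_pair_out n (X : rel 'I_n) p q :
  irreflexive X -> ~~ X q p -> sink_equivalent X [set p; q] ->
  forall b, b != q -> X q b = X p b.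
Proof.
move=> X_irr nXqp sinkE b b_neq_q; have [-> | b_neq_p] := eqVneq b p.
  by rewrite X_irr (negbTE nXqp).
have : b \notin [set p; q] by rewrite !inE negb_or b_neq_p.
by case/sinkE => Xb; rewrite ?(negbTE (Xb _ _)) ?Xb // !inE eqxx ?orbT.
Qed.

Section DeleteVertex.

Variables (m : nat) (X : rel 'I_m.+2) (q : 'I_m.+2) (p' : 'I_m.+1).
Hypotheses (Xpq : X (lift q p') q) (Xq_out : forall b, b != q -> X q b = X (lift q p') b).

Lemma cycle_weight_delete_vertex (t : {perm 'I_m.+1}) : t p' = ord_max ->
  cycle_weight (mult_simple X) (lift_perm q ord_max t) =
    (cycle_weight (mult_simple (delete_vertex X q)) t).+1.
Proof.
move=> t_p'; have := cycle_weight_lift_perm q (mult_simple X) t_p'.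
rewrite /mult_simple /delete_vertex Xpq Xq_out 1?eq_sym ?neq_lift //=.
lia.
Qed.

Lemma sum_edge_delete_vertex :
  \sum_(s : {perm 'I_m.+2} | (s q == s (lift q p') + Zp1) && (s q == ord_max))
     'X^(cycle_weight (mult_simple X) s) =
  'X * \sum_(t : {perm 'I_m.+1} | t p' == ord_max)
     'X^(cycle_weight (mult_simple (delete_vertex X q)) t) :> {poly rat}.
Proof.
rewrite (eq_bigl _ _ (fun s => andbC _ _)) big_mkcondr big_lift_perm.
rewrite mulr_sumr [RHS]big_mkcond; apply: eq_bigr => t _.
rewrite lift_perm_id lift_perm_lift lift_max_addZp1.
have [t_p' | t_p'_neq] := eqVneq (t p') ord_max.
  by rewrite eqxx cycle_weight_delete_vertex // exprS.
by rewrite (negbTE (neq_lift _ _)).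
Qed.

End DeleteVertex.

Theorem mainTheorem15 (n : nat) (X : rel 'I_n) (p q : 'I_n) :
  (2 <= n)%N ->
  simple_digraph X ->
  X p q ->
  ~~ X q p ->
  sink_equivalent X [set p; q] ->
  ODP_edge (mult_simple X) (@mult_cycle n) p q =
    ((n%:R / (n.-1)%:R : rat) *: ('X * ODP (mult_simple (delete_vertex X q)) (@mult_cycle n.-1))).
Proof.
case: n X p q => [|[|m]] X p q // _ X_irr Xpq nXqp sinkE.
have p_neq_q : p != q by apply: contraTneq Xpq => ->; rewrite X_irr.
have [p' p_def | p_eq_q] := unliftP q p; last by rewrite p_eq_q eqxx in p_neq_q.
have X_loopless a : mult_simple X a a = 0%N by rewrite /mult_simple X_irr.
rewrite ODP_edge_cycle // (ODP_cycle (k := m) p') => [|a]; last exact: X_loopless.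
rewrite p_def sum_edge_delete_vertex -?p_def //; last first.
  by move=> b; apply: sink_equivalent_pair_out.
by rewrite mulrnAr -!scaler_nat scalerA divfK // Num.Theory.pnatr_eq0.
Qed.
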